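(* Let $P$ be a weighted combinatorial optimization problem and let $A$ be a deterministic algorithm for $P$ that uses symbolic perturbation. Let $\mathcal{C}$ be any null case of $P$. Then the following three statements hold. (a) If $A(S,w) \in L$ for every instance $(S,w) \notin \mathcal{C}$, then $A(S,w) \in L$ for every instance $(S,w)$ of $P$. (b) Suppose that for each structure $S$, a nonnegative integer $\rho_S(\pi)$ (e.g. running time or memory consumption) is assigned to every root-to-leaf path $\pi$ of $T_S$. Let $\pi(S,w)$ denote the path traversed by $A$ on input $(S,w)$. Let $t : P \to \mathbb{N}$, and suppose $\rho_S(\pi(S,w)) \le t(S)$ for every instance $(S,w) \notin \mathcal{C}$. Then $\rho_S(\pi(S,w)) \le t(S)$ for every instance $(S,w)$. (c) Suppose $A(S,w) \in L$ for every instance $(S,w)$. For each $S=(n,W,L,\mathrm{cost}) \in P$, let $b(S,\cdot) : W \to \mathbb{R}$ be continuous. If $\mathrm{cost}(w, A(S,w)) \le b(S,w)$ for every instance $(S,w) \notin \mathcal{C}$, then this inequality holds for every instance $(S,w)$.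
   Context: Let $Q$ be a subfield of $\mathbb{R}$ (e.g. $\mathbb{R}$, $\mathbb{Q}$, or the real algebraic numbers). Equip $Q^n$ with the Euclidean metric $d$. For $x \in Q^n$ and $\epsilon>0$, the $\epsilon$-neighborhood of $x$ is $\{y \in Q^n \mid d(x,y)<\epsilon\}$. A neighborhood of $x$ is an $\epsilon$-neighborhood of $x$ for some $\epsilon>0$. A set $U \subseteq Q^n$ is open if it contains a neighborhood of each of its points. A set $C \subseteq Q^n$ is nowhere open if it contains no non-empty open subset of $Q^n$. A set $X \subseteq Q^n$ is semi-open if for every $x \in X$ and every neighborhood $N$ of $x$ there is a non-empty open set $U \subseteq Q^n$ with $U \subseteq N \cap X$. For $x \in \mathbb{R}$, $\mathrm{sgn}(x) = x/|x|$ if $x \neq 0$ and $\mathrm{sgn}(0)=0$. Problems: A weighted combinatorial optimization (minimization) problem $P$ is a set of problem structures; each structure $S=(n,W,L,\mathrm{cost})$ consists of a positive integer $n$, a semi-open set $W \subseteq Q^n$ of admissible weight vectors, a finite non-empty set $L$ of feasible solutions, and a function $\mathrm{cost} : W \times L \to \mathbb{R}$ such that $\mathrm{cost}(\cdot,l)$ is continuous on $W$ for every $l \in L$. An instance is a pair $(S,w)$ with $S \in P$ and $w \in W$. A null case of $P$ is a set $\mathcal{C}$ of instances of $P$ such that for every structure $S=(n,W,L,\mathrm{cost}) \in P$ the set $\{w \in W \mid (S,w) \in \mathcal{C}\}$ is nowhere open. Algorithms: A deterministic algorithm $A$ for $P$ assigns to each structure $S=(n,W,L,\mathrm{cost}) \in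 P$ a finite rooted binary decision tree $T_S$. Each leaf is labelled with an element of $L \cup \{l_f\}$, where $l_f \notin L$ is a special symbol representing failure. Each internal node $u$ is labelled with a continuous branching function $v_u : W \to Q$. On input $(S,w)$, $A$ starts at the root of $T_S$. At an internal node $u$ it moves to the left child if $v_u(w)<0$ and to the right child if $v_u(w)>0$. If $v_u(w)=0$ (a tie), it moves to the left or right child according to a deterministic tie-breaking policy, i.e. a rule fixing, for every instance $(S,w)$ and every internal node $u$ with $v_u(w)=0$, which child is taken. $A$ returns the label $A(S,w)$ of the leaf reached. Directions: Let $W \subseteq Q^n$ be semi-open, $w \in W$, and $h : \mathbb{R} \to Q^n$ with $h(0)=0$ and $h$ continuous at $0$. $W$ continues into direction $h$ at $w$ if there is $\delta>0$ such that for every $0<a<\delta$ some neighborhood of $w+h(a)$ is contained in $W$. If $W$ continues into direction $h$ at $w$ and $f : W \to Q$ is continuous, then $f$ is increasing (resp. constant, decreasing) into direction $h$ at $w$ if the following holds: there is $\delta>0$ such that for every $0<a<\delta$ there is a neighborhood $N_a \subseteq W$ of $w+h(a)$ with $\mathrm{sgn}(f(y)-f(w)) = 1$ (resp. $0$, $-1$) for all $y \in N_a$. Symbolic perturbation: $A$ uses symbolic perturbation if, for every instance $(S,w)$ with $S=(n,W,L,\mathrm{cost})$, there exists a function $h_{S,w} : \mathbb{R} \to Q^n$ satisfying all of the following: - $h_{S,w}(0)=0$ and $h_{S,w}$ is continuous at $0$; - $W$ continues into direction $h_{S,w}$ at $w$; - every branching function of $T_S$ is decreasing, constant, or increasing into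 direction $h_{S,w}$ at $w$; - whenever a tie $v_u(w)=0$ occurs at an internal node $u$ on input $(S,w)$, $A$ takes the left child if $v_u$ is decreasing into direction $h_{S,w}$ at $w$, and the right child otherwise. *)

From Stdlib Require Import Reals List.
Import ListNotations.
Open Scope R_scope.

Definition subfield (Q : R -> Prop) : Prop :=
  Q 0 /\ Q 1 /\
  (forall x y, Q x -> Q y -> Q (x + y)) /\
  (forall x, Q x -> Q (- x)) /\
  (forall x y, Q x -> Q y -> Q (x * y)) /\
  (forall x, Q x -> x <> 0 -> Q (/ x)).

(* Vectors: functions nat -> R; a point of Q^n has coordinates 0..n-1 in Q
   and is padded with zeros beyond n (so representation is unique). *)
Definition vec := nat -> R.

Definition Qpt (Q : R -> Prop) (n : nat) (x : vec) : Prop :=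
  (forall i, (i < n)%nat -> Q (x i)) /\ (forall i, (n <= i)%nat -> x i = 0).

Definition vzero : vec := fun _ => 0.
Definition vadd (x y : vec) : vec := fun i => x i + y i.

Fixpoint sumsq (n : nat) (x y : vec) : R :=
  match n with
  | O => 0
  | S m => sumsq m x y + (x m - y m) ^ 2
  end.

Definition dist (n : nat) (x y : vec) : R := sqrt (sumsq n x y).

Definition nbhd (Q : R -> Prop) (n : nat) (x : vec) (eps : R) (y : vec) : Prop :=
  Qpt Q n y /\ dist n x y < eps.

Definition is_open (Q : R -> Prop) (n : nat) (U : vec -> Prop) : Prop :=
  (forall x, U x -> Qpt Q n x) /\
  (forall x, U x -> exists eps, eps > 0 /\ forall y, nbhd Q n x eps y -> U y).

Definition nowhere_open (Q : R -> Prop) (n : nat) (C : vec -> Prop) : Prop :=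
  forall U : vec -> Prop, is_open Q n U -> (forall x, U x -> C x) ->
    forall x, ~ U x.

Definition semi_open (Q : R -> Prop) (n : nat) (X : vec -> Prop) : Prop :=
  (forall x, X x -> Qpt Q n x) /\
  forall x eps, X x -> eps > 0 ->
    exists U : vec -> Prop, is_open Q n U /\ (exists u, U u) /\
      (forall y, U y -> nbhd Q n x eps y /\ X y).

Definition cont_on (n : nat) (W : vec -> Prop) (f : vec -> R) : Prop :=
  forall x eps, W x -> eps > 0 ->
    exists delta, delta > 0 /\
      forall y, W y -> dist n x y < delta -> Rabs (f y - f x) < eps.

Definition sgn (x : R) : R := if Req_EM_T x 0 then 0 else x / Rabs x.

Record structure := mkStructure {
  s_n : nat;
  s_W : vec -> Prop;
  s_L : Type;
  s_cost : vec -> s_L -> R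
}.

Definition valid_structure (Q : R -> Prop) (S : structure) : Prop :=
  semi_open Q (s_n S) (s_W S) /\
  (exists enum : list (s_L S), forall l, In l enum) /\
  inhabited (s_L S) /\
  (forall l, cont_on (s_n S) (s_W S) (fun w => s_cost S w l)).

(* Finite rooted binary decision trees; leaves labelled by L ∪ {l_f}
   where None represents the failure symbol l_f. *)
Inductive dtree (L : Type) : Type :=
| Leaf : option L -> dtree L
| Node : (vec -> R) -> dtree L -> dtree L -> dtree L.
Arguments Leaf {L} _.
Arguments Node {L} _ _ _.

(* Nodes are addressed by the list of directions from the root
   (false = left, true = right). *)
Fixpoint subtree {L} (T : dtree L) (addr : list bool) : option (dtree L) :=
  match addr with
  | [] => Some T
  | d :: a =>
      match T with
      | Leaf _ => None
      | Node _ l r => subtree (if d then r else l) a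
      end
  end.

(* Execution: [tb addr] is the tie-breaking choice (true = right) at the
   internal node with address [addr] (relevant only when v_u(w) = 0). *)
Fixpoint run {L} (T : dtree L) (w : vec) (tb : list bool -> bool)
    (addr : list bool) : list bool * option L :=
  match T with
  | Leaf l => ([], l)
  | Node v l r =>
      let d := if Rlt_dec (v w) 0 then false
               else if Rlt_dec 0 (v w) then true
               else tb addr in
      let res := run (if d then r else l) w tb (addr ++ [d]) in
      (d :: fst res, snd res)
  end.

Definition valid_tree (Q : R -> Prop) (n : nat) (W : vec -> Prop) {L}
    (T : dtree L) : Prop :=
  forall addr v l r, subtree T addr = Some (Node v l r) ->
    (forall x, W x -> Q (v x)) /\ cont_on n W v.

Definition continues (Q : R -> Prop) (n : nat) (W : vec -> Prop)
    (h : R -> vec) (w : vec) : Prop :=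
  exists delta, delta > 0 /\
    forall a, 0 < a < delta ->
      exists eps, eps > 0 /\ forall y, nbhd Q n (vadd w (h a)) eps y -> W y.

(* f is increasing (s = 1), constant (s = 0), decreasing (s = -1)
   into direction h at w *)
Definition dir_sign (Q : R -> Prop) (n : nat) (W : vec -> Prop)
    (f : vec -> R) (h : R -> vec) (w : vec) (s : R) : Prop :=
  exists delta, delta > 0 /\
    forall a, 0 < a < delta ->
      exists eps, eps > 0 /\
        forall y, nbhd Q n (vadd w (h a)) eps y ->
          W y /\ sgn (f y - f w) = s.

Definition decreasing_dir Q n W f h w := dir_sign Q n W f h w (-1).

Definition admissible_direction (Q : R -> Prop) (n : nat) (W : vec -> Prop)
    (w : vec) (h : R -> vec) : Prop :=
  h 0 = vzero /\
  (forall a, Qpt Q n (h a)) /\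
  (forall eps, eps > 0 -> exists delta, delta > 0 /\
      forall a, Rabs a < delta -> dist n (h a) (h 0) < eps) /\
  continues Q n W h w.

Definition uses_symbolic_perturbation (Q : R -> Prop) (I : Type)
    (S : I -> structure) (A : forall i, dtree (s_L (S i)))
    (tb : forall i : I, vec -> list bool -> bool) : Prop :=
  forall i w, s_W (S i) w ->
    exists h : R -> vec,
      admissible_direction Q (s_n (S i)) (s_W (S i)) w h /\
      (forall addr v l r, subtree (A i) addr = Some (Node v l r) ->
         dir_sign Q (s_n (S i)) (s_W (S i)) v h w (-1) \/
         dir_sign Q (s_n (S i)) (s_W (S i)) v h w 0 \/
         dir_sign Q (s_n (S i)) (s_W (S i)) v h w 1) /\
      (forall addr rest v l r,
         addr ++ rest = fst (run (A i) w (tb i w) []) ->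
         subtree (A i) addr = Some (Node v l r) ->
         v w = 0 ->
         (tb i w addr = false <->
            dir_sign Q (s_n (S i)) (s_W (S i)) v h w (-1))).

Definition alg_path {I} (S : I -> structure) (A : forall i, dtree (s_L (S i)))
    (tb : forall i : I, vec -> list bool -> bool) (i : I) (w : vec) : list bool :=
  fst (run (A i) w (tb i w) []).

Definition alg_out {I} (S : I -> structure) (A : forall i, dtree (s_L (S i)))
    (tb : forall i : I, vec -> list bool -> bool) (i : I) (w : vec)
    : option (s_L (S i)) :=
  snd (run (A i) w (tb i w) []).

(* null case: C i w means (S i, w) ∈ C *)
Definition null_case (Q : R -> Prop) {I} (S : I -> structure)
    (C : I -> vec -> Prop) : Prop :=
  forall i, nowhere_open Q (s_n (S i)) (fun w => s_W (S i) w /\ C i w).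

(* Fix an instance (S, w) and the perturbation direction h at w.  For
   small a > 0 the points near w + h a lie in W, and on them every branching
   function v has the sign it has "into direction h" at w.  Consider an input y
   near w that is interior to such a neighborhood.  At every node of w's path,
   y branches like w: away from ties by continuity of v; at a tie, if v is
   decreasing/increasing into h then v(y) < 0 resp. > 0 and w breaks the tie
   the same way; if v is constant into h then v vanishes around y, so y is a
   tie that is not decreasing into any direction and both y and w go right.
   Hence y makes exactly the run of w.  Since W is semi-open, the neighborhood
   of w + h a contains a non-empty open set, which a nowhere-open null case
   cannot cover; this yields such y outside the null case, arbitrarily close
   to w.  Parts (a) and (b) follow at once, and (c) by continuity of the cost
   and of the bound. *)

(* Defs is imported last so that its [dist] shadows the metric of Reals. *)
From Stdlib Require Import Reals List Lra Classical.
From Pilot Require Import Defs.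
Import ListNotations.
Open Scope R_scope.

Lemma sgn_pos x : x > 0 -> sgn x = 1.
Proof.
  intro Hx; unfold sgn; destruct (Req_EM_T x 0); [lra|].
  rewrite Rabs_right by lra; field; lra.
Qed.

Lemma sgn_neg x : x < 0 -> sgn x = -1.
Proof.
  intro Hx; unfold sgn; destruct (Req_EM_T x 0); [lra|].
  rewrite Rabs_left by lra; field; lra.
Qed.

Lemma sgn_zero : sgn 0 = 0.
Proof. unfold sgn; destruct (Req_EM_T 0 0); [reflexivity | lra]. Qed.

Lemma sgn_inv x :
  (sgn x = -1 -> x < 0) /\ (sgn x = 0 -> x = 0) /\ (sgn x = 1 -> x > 0).
Proof.
  destruct (Rtotal_order x 0) as [Hx | [Hx | Hx]].
  - rewrite (sgn_neg x Hx); repeat split; intros; lra.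
  - subst x; rewrite sgn_zero; repeat split; intros; lra.
  - rewrite (sgn_pos x Hx); repeat split; intros; lra.
Qed.

Lemma sumsq_self n x : sumsq n x x = 0.
Proof. induction n as [|n IH]; simpl; [reflexivity|]; rewrite IH; ring. Qed.

Lemma sumsq_nonneg n x y : 0 <= sumsq n x y.
Proof. induction n as [|n IH]; simpl; [lra|]; pose proof (pow2_ge_0 (x n - y n)); lra. Qed.

Lemma sumsq_shift n x u : sumsq n x (vadd x u) = sumsq n u vzero.
Proof. induction n as [|n IH]; simpl; [reflexivity|]; rewrite IH; unfold vadd, vzero; ring. Qed.

(* (a - c)^2 <= 2 (a - b)^2 + 2 (b - c)^2, summed over the coordinates. *)
Lemma sumsq_tri n x y z : sumsq n x z <= 2 * sumsq n x y + 2 * sumsq n y z.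
Proof.
  induction n as [|n IH]; simpl; [lra|].
  pose proof (pow2_ge_0 ((x n - y n) - (y n - z n))); nra.
Qed.

Lemma dist_self n x : dist n x x = 0.
Proof. unfold dist; rewrite sumsq_self; exact sqrt_0. Qed.

Lemma dist_shift n x u : dist n x (vadd x u) = dist n u vzero.
Proof. unfold dist; rewrite sumsq_shift; reflexivity. Qed.

(* A weak triangle inequality, sufficient for all epsilon-management below. *)
Lemma dist_lt_double n x y z e :
  dist n x y < e -> dist n y z < e -> dist n x z < 2 * e.
Proof.
  unfold dist; intros Hxy Hyz.
  pose proof (sumsq_nonneg n x y); pose proof (sumsq_nonneg n y z).
  pose proof (sqrt_sqrt _ (sumsq_nonneg n x y)); pose proof (sqrt_pos (sumsq n x y)).
  pose proof (sqrt_sqrt _ (sumsq_nonneg n y z)); pose proof (sqrt_pos (sumsq n y z)).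
  pose proof (sumsq_tri n x y z).
  rewrite <- (sqrt_square (2 * e)) by lra.
  apply sqrt_lt_1; [apply sumsq_nonneg | nra | nra].
Qed.

Lemma Qpt_add Q n x y :
  subfield Q -> Qpt Q n x -> Qpt Q n y -> Qpt Q n (vadd x y).
Proof.
  intros [_ [_ [Hadd _]]] [Hx Hx0] [Hy Hy0]; split; intros i Hi; unfold vadd.
  - apply Hadd; auto.
  - rewrite Hx0, Hy0 by exact Hi; ring.
Qed.

Lemma nbhd_center Q n x e : Qpt Q n x -> e > 0 -> nbhd Q n x e x.
Proof. intros Hx He; split; [exact Hx | rewrite dist_self; lra]. Qed.

Definition interior_pt (Q : R -> Prop) (n : nat) (X : vec -> Prop) (y : vec) : Prop :=
  X y /\ exists r, r > 0 /\ forall z, nbhd Q n y r z -> X z.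

Lemma interior_pt_mono Q n (X Y : vec -> Prop) y :
  (forall z, X z -> Y z) -> interior_pt Q n X y -> interior_pt Q n Y y.
Proof. intros HXY [Hy [r [Hr Hball]]]; split; [auto | exists r; split; auto]. Qed.

Lemma perturbation_small n x (h : R -> vec) :
  h 0 = vzero ->
  (forall eps, eps > 0 -> exists delta, delta > 0 /\
      forall a, Rabs a < delta -> dist n (h a) (h 0) < eps) ->
  forall eps, eps > 0 -> exists delta, delta > 0 /\
    forall a, 0 < a < delta -> dist n x (vadd x (h a)) < eps.
Proof.
  intros Hh0 Hhc eps Heps; destruct (Hhc eps Heps) as [delta [Hdelta Hsmall]].
  exists delta; split; [exact Hdelta|]; intros a Ha.
  rewrite dist_shift, <- Hh0; apply Hsmall; rewrite Rabs_right; lra.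
Qed.

Section DirectionalSigns.

Variables (Q : R -> Prop) (n : nat) (W : vec -> Prop).
Hypothesis HQ : subfield Q.

(* The sign of [f] into a direction is unique: both signs are read off at the
   same point [x + h a] for [a] below both thresholds. *)
Lemma dir_sign_unique f h x s1 s2 :
  Qpt Q n x -> (forall a, Qpt Q n (h a)) ->
  dir_sign Q n W f h x s1 -> dir_sign Q n W f h x s2 -> s1 = s2.
Proof.
  intros Hx Hh [d1 [Hd1 H1]] [d2 [Hd2 H2]].
  pose proof (Rmin_l d1 d2); pose proof (Rmin_r d1 d2).
  assert (Hmin : 0 < Rmin d1 d2) by (apply Rmin_pos; auto).
  set (a := Rmin d1 d2 / 2).
  destruct (H1 a) as [e1 [He1 K1]]; [unfold a; lra|].
  destruct (H2 a) as [e2 [He2 K2]]; [unfold a; lra|].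
  assert (Hxa : Qpt Q n (vadd x (h a))) by (apply Qpt_add; auto).
  destruct (K1 _ (nbhd_center _ _ _ _ Hxa He1)) as [_ E1].
  destruct (K2 _ (nbhd_center _ _ _ _ Hxa He2)) as [_ E2].
  congruence.
Qed.

(* A function that is constant near [x] has sign 0 into every admissible
   direction at [x]: the points [x + h a] eventually lie in that neighborhood. *)
Lemma dir_sign_locally_const f h x r s :
  Qpt Q n x -> admissible_direction Q n W x h ->
  r > 0 -> (forall z, nbhd Q n x r z -> f z = f x) ->
  dir_sign Q n W f h x s -> s = 0.
Proof.
  intros Hx [Hh0 [Hh [Hhc _]]] Hr Hconst [ds [Hds Hsign]].
  destruct (perturbation_small n x h Hh0 Hhc r Hr) as [dh [Hdh Hnear]].
  pose proof (Rmin_l ds dh); pose proof (Rmin_r ds dh).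
  assert (Hmin : 0 < Rmin ds dh) by (apply Rmin_pos; auto).
  set (a := Rmin ds dh / 2).
  destruct (Hsign a) as [e [He Ke]]; [unfold a; lra|].
  assert (Hxa : Qpt Q n (vadd x (h a))) by (apply Qpt_add; auto).
  destruct (Ke _ (nbhd_center _ _ _ _ Hxa He)) as [_ Hs].
  rewrite (Hconst (vadd x (h a))), Rminus_diag, sgn_zero in Hs; [congruence|].
  split; [exact Hxa | apply Hnear; unfold a; lra].
Qed.

End DirectionalSigns.

(* Removing a nowhere-open set [C] from a semi-open [W] leaves interior points
   of [W] in every neighborhood of each point of [W]: the non-empty open set
   that [W] provides there cannot lie entirely inside [C]. *)
Lemma interior_off_null Q n (W C : vec -> Prop) x e :
  semi_open Q n W -> nowhere_open Q n (fun z => W z /\ C z) -> W x -> e > 0 ->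
  exists y, ~ C y /\ interior_pt Q n (fun z => nbhd Q n x e z /\ W z) y.
Proof.
  intros [_ HWsemi] HC Hx He.
  destruct (HWsemi x e Hx He) as [U [[HUQ HUopen] [[u Uu] HUsub]]].
  destruct (classic (exists y, U y /\ ~ C y)) as [[y [Uy NCy]] | Hall].
  - exists y; split; [exact NCy | split; [exact (HUsub y Uy)|]].
    destruct (HUopen y Uy) as [r [Hr Kr]]; exists r; split; [exact Hr|].
    intros z Hz; exact (HUsub z (Kr z Hz)).
  - exfalso; apply (HC U (conj HUQ HUopen)) with u; [|exact Uu].
    intros z Uz; split; [exact (proj2 (HUsub z Uz))|].
    apply NNPP; intro NCz; apply Hall; exists z; auto.
Qed.

Section AlongDirection.

Variables (Q : R -> Prop) (n : nat) (W : vec -> Prop) (w : vec) (h : R -> vec).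

(* [P] holds "near w, approached along h": close to [w], at every point [y] that
   is interior to the small neighborhood [N_a] of [w + h a] inside [W], for all
   sufficiently small [a > 0].  These sets behave like a filter. *)
Definition near_along (P : vec -> Prop) : Prop :=
  exists rr, rr > 0 /\ exists delta, delta > 0 /\
    forall a, 0 < a < delta -> exists e, e > 0 /\
      forall y, dist n w y < rr ->
        interior_pt Q n (fun z => nbhd Q n (vadd w (h a)) e z /\ W z) y -> P y.

Lemma near_along_of_forall (P : vec -> Prop) :
  (forall y, P y) -> near_along P.
Proof.
  intro HP; exists 1; split; [lra|]; exists 1; split; [lra|].
  intros a _; exists 1; split; [lra|]; auto.
Qed.

Lemma near_along_and (P1 P2 P : vec -> Prop) :
  (forall y, P1 y -> P2 y -> P y) -> near_along P1 -> near_along P2 -> near_along P.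
Proof.
  intros HP [r1 [Hr1 [d1 [Hd1 K1]]]] [r2 [Hr2 [d2 [Hd2 K2]]]].
  pose proof (Rmin_l r1 r2); pose proof (Rmin_r r1 r2).
  pose proof (Rmin_l d1 d2); pose proof (Rmin_r d1 d2).
  exists (Rmin r1 r2); split; [apply Rmin_pos; auto|].
  exists (Rmin d1 d2); split; [apply Rmin_pos; auto|].
  intros a Ha.
  destruct (K1 a) as [e1 [He1 L1]]; [lra|].
  destruct (K2 a) as [e2 [He2 L2]]; [lra|].
  pose proof (Rmin_l e1 e2); pose proof (Rmin_r e1 e2).
  exists (Rmin e1 e2); split; [apply Rmin_pos; auto|].
  intros y Hy Hint; apply HP.
  - apply L1; [lra|]; revert Hint; apply interior_pt_mono.
    intros z [[Hz Hd] Wz]; split; [split; [exact Hz | lra] | exact Wz].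
  - apply L2; [lra|]; revert Hint; apply interior_pt_mono.
    intros z [[Hz Hd] Wz]; split; [split; [exact Hz | lra] | exact Wz].
Qed.

Lemma near_along_mono (P P' : vec -> Prop) :
  (forall y, P y -> P' y) -> near_along P -> near_along P'.
Proof.
  intros HP HnP; apply (near_along_and P (fun _ => True)); auto.
  apply near_along_of_forall; auto.
Qed.

Lemma near_along_of_ball (P : vec -> Prop) r :
  r > 0 -> (forall y, W y -> dist n w y < r -> P y) -> near_along P.
Proof.
  intros Hr HP; exists r; split; [exact Hr|]; exists 1; split; [lra|].
  intros a _; exists 1; split; [lra|].
  intros y Hy [[_ Wy] _]; auto.
Qed.

Lemma near_along_of_dir_sign f s :
  dir_sign Q n W f h w s ->
  near_along (interior_pt Q n (fun z => W z /\ sgn (f z - f w) = s)).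
Proof.
  intros [ds [Hds Hsign]]; exists 1; split; [lra|]; exists ds; split; [exact Hds|].
  intros a Ha; destruct (Hsign a Ha) as [e [He Ke]]; exists e; split; [exact He|].
  intros y _; apply interior_pt_mono; intros z [Hz _]; exact (Ke z Hz).
Qed.

(* Witnesses: a property holding near [w] along an admissible direction holds
   at points arbitrarily close to [w] that avoid any null set [C]; apply
   [interior_off_null] to the neighborhood of [w + h a] for a small [a]. *)
Lemma near_along_witness (C : vec -> Prop) (P : vec -> Prop) :
  subfield Q -> semi_open Q n W -> nowhere_open Q n (fun x => W x /\ C x) ->
  W w -> admissible_direction Q n W w h -> near_along P ->
  forall eps, eps > 0 -> exists y, W y /\ ~ C y /\ dist n w y < eps /\ P y.
Proof.
  intros HQ HW HC Hw [Hh0 [Hh [Hhc [dc [Hdc Hcont]]]]]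
         [rr [Hrr [delta [Hdelta K]]]] eps Heps.
  set (m := Rmin rr eps).
  assert (Hm : m > 0) by (apply Rmin_pos; auto).
  assert (Hmr : m <= rr) by apply Rmin_l.
  assert (Hme : m <= eps) by apply Rmin_r.
  destruct (perturbation_small n w h Hh0 Hhc (m / 2)) as [dh [Hdh Hsmall]]; [lra|].
  set (a := Rmin (Rmin delta dc) dh / 2).
  assert (0 < Rmin (Rmin delta dc) dh) by (repeat apply Rmin_pos; auto).
  pose proof (Rmin_l (Rmin delta dc) dh); pose proof (Rmin_r (Rmin delta dc) dh).
  pose proof (Rmin_l delta dc); pose proof (Rmin_r delta dc).
  destruct (K a) as [e [He Ke]]; [unfold a; lra|].
  destruct (Hcont a) as [ec [Hec Kec]]; [unfold a; lra|].
  set (x0 := vadd w (h a)).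
  assert (Wx0 : W x0) by (apply Kec, nbhd_center; [exact (Qpt_add Q n w (h a) HQ (proj1 HW w Hw) (Hh a)) | exact Hec]).
  assert (Dx0 : dist n w x0 < m / 2) by (apply Hsmall; unfold a; lra).
  set (e0 := Rmin e (m / 2)).
  assert (He0 : e0 > 0) by (apply Rmin_pos; lra).
  assert (He0e : e0 <= e) by apply Rmin_l.
  assert (He0m : e0 <= m / 2) by apply Rmin_r.
  destruct (interior_off_null Q n W C x0 e0 HW HC Wx0 He0) as [y [NCy Hint]].
  pose proof Hint as [[[_ Dy] Wy] _].
  assert (Dwy : dist n w y < 2 * (m / 2)) by (apply (dist_lt_double n w x0 y); lra).
  exists y; split; [exact Wy|]; split; [exact NCy|]; split; [lra|].
  apply Ke; [lra|]; revert Hint; apply interior_pt_mono.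
  intros z [[Qz Dz] Wz]; split; [split; [exact Qz | fold x0; lra] | exact Wz].
Qed.

End AlongDirection.

Definition branch (v : vec -> R) (x : vec) (tb : list bool -> bool)
    (addr : list bool) : bool :=
  if Rlt_dec (v x) 0 then false else if Rlt_dec 0 (v x) then true else tb addr.

Lemma branch_neg v x tb addr : v x < 0 -> branch v x tb addr = false.
Proof. intro Hv; unfold branch; destruct (Rlt_dec (v x) 0); [reflexivity | lra]. Qed.

Lemma branch_pos v x tb addr : v x > 0 -> branch v x tb addr = true.
Proof.
  intro Hv; unfold branch.
  destruct (Rlt_dec (v x) 0); [lra|]; destruct (Rlt_dec 0 (v x)); [reflexivity | lra].
Qed.

Lemma branch_tie v x tb addr : v x = 0 -> branch v x tb addr = tb addr.
Proof.
  intro Hv; unfold branch; rewrite Hv.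
  destruct (Rlt_dec 0 0); [lra|]; destruct (Rlt_dec 0 0); [lra | reflexivity].
Qed.

Lemma run_node {L} v (l r : dtree L) x tb addr :
  run (Node v l r) x tb addr =
  let d := branch v x tb addr in
  let res := run (if d then r else l) x tb (addr ++ [d]) in
  (d :: fst res, snd res).
Proof. reflexivity. Qed.

Lemma subtree_root {L} (T : dtree L) : subtree T [] = Some T.
Proof. destruct T; reflexivity. Qed.

Lemma subtree_child {L} (T : dtree L) addr v l r d :
  subtree T addr = Some (Node v l r) ->
  subtree T (addr ++ [d]) = Some (if d then r else l).
Proof.
  revert T; induction addr as [|b addr IH]; intros T Hsub; simpl in *.
  - destruct T; inversion Hsub; subst; destruct d; [destruct r | destruct l]; reflexivity.
  - destruct T; [discriminate | exact (IH _ Hsub)].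
Qed.

(* The symbolic-perturbation requirements on one decision tree [T] at the
   weight vector [w], with witness direction [h]; [uses_symbolic_perturbation]
   asks for such an [h] at every admissible [w] of every structure. *)
Definition perturbs_symbolically (Q : R -> Prop) (n : nat) (W : vec -> Prop)
    {L} (T : dtree L) (tb : vec -> list bool -> bool) (w : vec) (h : R -> vec)
    : Prop :=
  admissible_direction Q n W w h /\
  (forall addr v l r, subtree T addr = Some (Node v l r) ->
     dir_sign Q n W v h w (-1) \/ dir_sign Q n W v h w 0 \/ dir_sign Q n W v h w 1) /\
  (forall addr rest v l r,
     addr ++ rest = fst (run T w (tb w) []) ->
     subtree T addr = Some (Node v l r) -> v w = 0 ->
     (tb w addr = false <-> dir_sign Q n W v h w (-1))).

Section TreeStability.

Variables (Q : R -> Prop) (n : nat) (W : vec -> Prop).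
Variables (L : Type) (T0 : dtree L) (tb : vec -> list bool -> bool).
Hypothesis HQ : subfield Q.
Hypothesis HWQ : forall x, W x -> Qpt Q n x.
Hypothesis HT : valid_tree Q n W T0.
Hypothesis Hsp : forall x, W x -> exists h, perturbs_symbolically Q n W T0 tb x h.

Definition tree_path (x : vec) : list bool := fst (run T0 x (tb x) []).

(* At a tie on the path of [x], the rule goes right exactly when [v] is not
   decreasing into the perturbation direction (directional signs are unique). *)
Lemma tie_break_right x hx addr rest v l r s :
  W x -> perturbs_symbolically Q n W T0 tb x hx ->
  subtree T0 addr = Some (Node v l r) -> addr ++ rest = tree_path x -> v x = 0 ->
  dir_sign Q n W v hx x s -> s <> -1 -> tb x addr = true.
Proof.
  intros Hx [Hadm [_ Htie]] Hsub Hon Hzero Hs Hs_neq.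
  destruct (tb x addr) eqn:E; [reflexivity | exfalso].
  apply Hs_neq, (dir_sign_unique Q n W HQ v hx x s (-1) (HWQ x Hx) (proj1 (proj2 Hadm)) Hs).
  exact (proj1 (Htie addr rest v l r Hon Hsub Hzero) E).
Qed.

(* If [v] vanishes on a whole neighborhood of a tie [y], the direction sign
   of [v] at [y] is 0 whatever the perturbation, so [y] breaks the tie right. *)
Lemma tie_break_locally_zero y addr rest v l r ry :
  W y -> subtree T0 addr = Some (Node v l r) -> addr ++ rest = tree_path y ->
  ry > 0 -> (forall z, nbhd Q n y ry z -> v z = 0) -> v y = 0 -> tb y addr = true.
Proof.
  intros Hy Hsub Hon Hry Hvanish Hzero.
  destruct (Hsp y Hy) as [hy Hpert_y].
  assert (Hconst : forall z, nbhd Q n y ry z -> v z = v y)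
    by (intros z Hz; rewrite Hzero; exact (Hvanish z Hz)).
  assert (Hsign : exists s, dir_sign Q n W v hy y s /\ s <> -1).
  { destruct (proj1 (proj2 Hpert_y) addr v l r Hsub) as [Ds | [Ds | Ds]].
    - pose proof (dir_sign_locally_const Q n W HQ v hy y ry (-1) (HWQ y Hy)
                    (proj1 Hpert_y) Hry Hconst Ds); lra.
    - exists 0; split; [exact Ds | lra].
    - exists 1; split; [exact Ds | lra]. }
  destruct Hsign as [s [Ds Hs]].
  exact (tie_break_right y hy addr rest v l r s Hy Hpert_y Hsub Hon Hzero Ds Hs).
Qed.

Section AtPoint.

Variables (w : vec) (h : R -> vec).
Hypothesis Hw : W w.
Hypothesis Hpert : perturbs_symbolically Q n W T0 tb w h.

(* Away from ties this
   is continuity of [v]; at a tie the directional sign of [v] at [w] decides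
   both the side of [y] and the tie-break at [w]. *)
Lemma branch_stable addr rest v l r :
  subtree T0 addr = Some (Node v l r) -> addr ++ rest = tree_path w ->
  near_along Q n W w h (fun y =>
    (exists rest', addr ++ rest' = tree_path y) ->
    branch v y (tb y) addr = branch v w (tb w) addr).
Proof.
  intros Hsub Hon.
  destruct Hpert as [_ [Hdir Htie]].
  destruct (HT addr v l r Hsub) as [_ Hcont].
  destruct (Rtotal_order (v w) 0) as [Hneg | [Hzero | Hpos]].
  - destruct (Hcont w (- v w) Hw) as [rv [Hrv Krv]]; [lra|].
    apply (near_along_of_ball _ _ _ _ _ _ rv Hrv); intros y Wy Hd _.
    specialize (Krv y Wy Hd); apply Rabs_def2 in Krv.
    rewrite !branch_neg by lra; reflexivity.
  - pose proof (Htie addr rest v l r Hon Hsub Hzero) as Htie_w.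
    rewrite (branch_tie v w) by exact Hzero.
    destruct (Hdir addr v l r Hsub) as [Ds | [Ds | Ds]].
    + (* decreasing: [y] lies strictly below, and [w] breaks the tie leftwards *)
      rewrite (proj2 Htie_w Ds).
      eapply near_along_mono; [|exact (near_along_of_dir_sign _ _ _ _ _ _ _ Ds)].
      intros y [[_ Hs] _] _; apply sgn_inv in Hs; rewrite Hzero in Hs.
      apply branch_neg; lra.
    + (* constant: [v] vanishes around [y], so both [w] and [y] go right *)
      rewrite (tie_break_right w h addr rest v l r 0 Hw Hpert Hsub Hon Hzero Ds) by lra.
      eapply near_along_mono; [|exact (near_along_of_dir_sign _ _ _ _ _ _ _ Ds)].
      intros y [[Wy Hvy] [ry [Hry Kry]]] [rest' Hon_y].
      assert (Hvanish : forall z, W z /\ sgn (v z - v w) = 0 -> v z = 0)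
        by (intros z [_ Hz]; apply sgn_inv in Hz; lra).
      rewrite branch_tie by exact (Hvanish y (conj Wy Hvy)).
      apply (tie_break_locally_zero y addr rest' v l r ry Wy Hsub Hon_y Hry);
        [intros z Hz; exact (Hvanish z (Kry z Hz)) | exact (Hvanish y (conj Wy Hvy))].
    + (* increasing: [y] lies strictly above, and [w] breaks the tie rightwards *)
      rewrite (tie_break_right w h addr rest v l r 1 Hw Hpert Hsub Hon Hzero Ds) by lra.
      eapply near_along_mono; [|exact (near_along_of_dir_sign _ _ _ _ _ _ _ Ds)].
      intros y [[_ Hs] _] _; apply sgn_inv in Hs; rewrite Hzero in Hs.
      apply branch_pos; lra.
  - destruct (Hcont w (v w) Hw) as [rv [Hrv Krv]]; [lra|].
    apply (near_along_of_ball _ _ _ _ _ _ rv Hrv); intros y Wy Hd _.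
    specialize (Krv y Wy Hd); apply Rabs_def2 in Krv.
    rewrite !branch_pos by lra; reflexivity.
Qed.

Lemma run_stable (T : dtree L) addr :
  subtree T0 addr = Some T ->
  addr ++ fst (run T w (tb w) addr) = tree_path w ->
  near_along Q n W w h (fun y =>
    addr ++ fst (run T y (tb y) addr) = tree_path y ->
    run T y (tb y) addr = run T w (tb w) addr).
Proof.
  revert addr; induction T as [o | v l IHl r IHr]; intros addr Hsub Hon.
  - apply near_along_of_forall; intros y _; reflexivity.
  - set (d := branch v w (tb w) addr).
    assert (Hchild : subtree T0 (addr ++ [d]) = Some (if d then r else l))
      by exact (subtree_child T0 addr v l r d Hsub).
    assert (Hon_child :
      (addr ++ [d]) ++ fst (run (if d then r else l) w (tb w) (addr ++ [d])) = tree_path w)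
      by (rewrite <- app_assoc; exact Hon).
    assert (IH : near_along Q n W w h (fun y =>
      (addr ++ [d]) ++ fst (run (if d then r else l) y (tb y) (addr ++ [d])) = tree_path y ->
      run (if d then r else l) y (tb y) (addr ++ [d])
        = run (if d then r else l) w (tb w) (addr ++ [d])))
      by (destruct d; [apply IHr | apply IHl]; assumption).
    refine (near_along_and _ _ _ _ _ _ _ _ _ IH (branch_stable addr _ v l r Hsub Hon)).
    intros y Hrun Hbr Hon_y; cbv beta in Hrun, Hbr.
    assert (Hd : branch v y (tb y) addr = d) by (apply Hbr; eexists; exact Hon_y).
    rewrite !run_node; cbn zeta; rewrite Hd, Hrun; [reflexivity|].
    rewrite <- app_assoc, <- Hon_y, run_node; cbn zeta; rewrite Hd; reflexivity.
Qed.

End AtPoint.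

Lemma same_run_nearby (C : vec -> Prop) :
  semi_open Q n W -> nowhere_open Q n (fun x => W x /\ C x) ->
  forall w, W w -> forall eps, eps > 0 ->
    exists y, W y /\ ~ C y /\ dist n w y < eps /\
      run T0 y (tb y) [] = run T0 w (tb w) [].
Proof.
  intros HW HC w Hw eps Heps.
  destruct (Hsp w Hw) as [h Hpert].
  pose proof (run_stable w h Hw Hpert T0 [] (subtree_root T0) eq_refl) as Hnear.
  destruct (near_along_witness Q n W w h C _ HQ HW HC Hw (proj1 Hpert) Hnear eps Heps)
    as [y [Wy [NCy [Hdy Hrun]]]].
  exists y; repeat split; auto.
Qed.

End TreeStability.

Lemma le_of_nearby_le n (W : vec -> Prop) (f g : vec -> R) w :
  cont_on n W f -> cont_on n W g -> W w ->
  (forall eps, eps > 0 -> exists y, W y /\ dist n w y < eps /\ f y <= g y) ->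
  f w <= g w.
Proof.
  intros Hf Hg Hw Hnear.
  destruct (Rle_lt_dec (f w) (g w)) as [Hle | Hlt]; [exact Hle | exfalso].
  set (gap := (f w - g w) / 2).
  assert (Hgap : gap > 0) by (unfold gap; lra).
  destruct (Hf w gap Hw Hgap) as [d1 [Hd1 K1]].
  destruct (Hg w gap Hw Hgap) as [d2 [Hd2 K2]].
  pose proof (Rmin_l d1 d2); pose proof (Rmin_r d1 d2).
  destruct (Hnear (Rmin d1 d2)) as [y [Wy [Hdy Hy]]]; [apply Rmin_pos; auto|].
  specialize (K1 y Wy ltac:(lra)); specialize (K2 y Wy ltac:(lra)).
  apply Rabs_def2 in K1; apply Rabs_def2 in K2; unfold gap in *; lra.
Qed.

Theorem theorem2
  (Q : R -> Prop) (HQ : subfield Q)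
  (I : Type) (S : I -> structure) (HS : forall i, valid_structure Q (S i))
  (A : forall i, dtree (s_L (S i)))
  (HA : forall i, valid_tree Q (s_n (S i)) (s_W (S i)) (A i))
  (tb : forall i : I, vec -> list bool -> bool)
  (Hsp : uses_symbolic_perturbation Q I S A tb)
  (C : I -> vec -> Prop) (HC : null_case Q S C) :
  (* (a) *)
  ((forall i w, s_W (S i) w -> ~ C i w ->
      exists l, alg_out S A tb i w = Some l) ->
   forall i w, s_W (S i) w -> exists l, alg_out S A tb i w = Some l) /\
  (* (b) *)
  (forall (rho : forall i : I, list bool -> nat) (t : I -> nat),
     (forall i w, s_W (S i) w -> ~ C i w ->
        (rho i (alg_path S A tb i w) <= t i)%nat) ->
     forall i w, s_W (S i) w -> (rho i (alg_path S A tb i w) <= t i)%nat) /\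
  (* (c) *)
  (forall b : I -> vec -> R,
     (forall i w, s_W (S i) w -> exists l, alg_out S A tb i w = Some l) ->
     (forall i, cont_on (s_n (S i)) (s_W (S i)) (b i)) ->
     (forall i w l, s_W (S i) w -> ~ C i w -> alg_out S A tb i w = Some l ->
        s_cost (S i) w l <= b i w) ->
     forall i w l, s_W (S i) w -> alg_out S A tb i w = Some l ->
        s_cost (S i) w l <= b i w).
Proof.
  assert (Hsame : forall i w, s_W (S i) w -> forall eps, eps > 0 ->
    exists y, s_W (S i) y /\ ~ C i y /\ dist (s_n (S i)) w y < eps /\
      run (A i) y (tb i y) [] = run (A i) w (tb i w) []).
  { intro i; destruct (HS i) as [HW _].
    exact (same_run_nearby Q (s_n (S i)) (s_W (S i)) _ (A i) (tb i) HQ (proj1 HW)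
             (HA i) (Hsp i) (C i) HW (HC i)). }
  split; [|split].
  - intros Hout i w Hw; destruct (Hsame i w Hw 1) as [y [Wy [NCy [_ Hrun]]]]; [lra|].
    unfold alg_out; rewrite <- Hrun; exact (Hout i y Wy NCy).
  - intros rho t Hrho i w Hw; destruct (Hsame i w Hw 1) as [y [Wy [NCy [_ Hrun]]]]; [lra|].
    unfold alg_path; rewrite <- Hrun; exact (Hrho i y Wy NCy).
  - intros b _ Hb Hcost i w l Hw Hl; destruct (HS i) as [_ [_ [_ Hcost_cont]]].
    apply (le_of_nearby_le _ _ (fun x => s_cost (S i) x l) (b i) w (Hcost_cont l) (Hb i) Hw).
    intros eps Heps; destruct (Hsame i w Hw eps Heps) as [y [Wy [NCy [Hdy Hrun]]]].
    exists y; repeat split; auto.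
    apply (Hcost i y l Wy NCy); unfold alg_out in *; rewrite Hrun; exact Hl.
Qed.
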